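(* Let $t$ be a positive integer. For every finite chordal trigraph $H$ whose total graph $\mathcal T(H)$ has clique number at most $t+1$ and whose real graph is triangle-free, every set $X\subseteq V(G'_t)$ such that $G'_t[X]$ is $H$-free, and every $u\in V(G'_t)$, there exists a downward path $P_u$ from $u$ in $T'_t$ with $|V(P_u)\cap X|\le|V(H)|-1$.
   Context: A trigraph is $(V,E_B,E_R)$ with disjoint sets $E_B$ (black edges) and $E_R$ (red edges); adjacency type of a pair is black, red or non-edge. Total graph: $(V,E_B\cup E_R)$; real graph: $(V,E_B)$; chordal if the total graph is chordal. $G[X]$ denotes the induced subtrigraph; $G$ is $H$-free if no induced subtrigraph of $G$ is isomorphic to $H$ (isomorphism preserving adjacency types). Construction of $G'_t$, $T'_t$: a countably infinite trigraph $G'_t$ and rooted tree $T'_t$ on the same vertex set, partitioned into finite layers $L_0,L_1,\dots$ each inducing a left-to-right path of black edges. $L_0$ is a single vertex, the root. With $L_{\le i}=L_0\cup\dots\cup L_i$, layer $L_{i+1}$ is built (starting empty) as follows: for each $u\in L_i$ from left to right, let $N^\uparrow[u]:=(N_{\mathcal T(G'_t)}(u)\cap L_{\le i-1})\cup\{u\}$ and let $\mathcal B$ be the set of subsets of $N^\uparrow[u]$ all of whose pairs are red edges. For every ordered pair $(B,R)$ of disjoint subsets of $N^\uparrow[u]$ with $B\in\mathcal B$ and $|B\cup R|\le t$: append a new vertex $v_{B,R}$ at the right end of $L_{i+1}$ (black edge to the previously rightmost vertex of $L_{i+1}$, if any), make it a child of $u$, add black edges from $v_{B,R}$ to all of $B$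 and red edges to all of $R$; then append another new vertex $v'_{B,R}$ at the right end of $L_{i+1}$ (black edge to the previously rightmost vertex) and make it a child of $u$, with no further edges. A downward path from $u$ in $T'_t$ is an infinite path $u_1u_2\dots$ in $T'_t$ with $u_1=u$ and each $u_i$ ($i>1$) a child of $u_{i-1}$. *)

From mathcomp Require Import all_boot.
Set Implicit Arguments. Unset Strict Implicit. Unset Printing Implicit Defensive.

Record trigraph := Trigraph {
  tvert :> finType;
  tblack : rel tvert;
  tred : rel tvert;
  tblack_sym : symmetric tblack;
  tred_sym : symmetric tred;
  tblack_irr : irreflexive tblack;
  tred_irr : irreflexive tred;
  tdisj : forall x y, tblack x y -> ~~ tred x y }.

Inductive adjtype := ANone | ABlack | ARed.
Definition atype {T} (b r : rel T) x y :=
  if b x y then ABlack else if r x y then ARed else ANone.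

Definition htotal (H : trigraph) : rel H := fun x y => tblack x y || tred x y.

(** A cycle is a duplicate-free sequence [x0 :: s'] of vertices with
    consecutive (cyclically) vertices adjacent; a chord is an edge between
    two cyclically non-consecutive positions. *)
Definition chordal (H : trigraph) : Prop :=
  forall (x0 : H) (s' : seq H), let s := x0 :: s' in
  4 <= size s -> uniq s -> cycle (@htotal H) s ->
  exists i j, [/\ i < size s, j < size s, i != j,
     (j != (i.+1 %% size s)) && (i != (j.+1 %% size s))
   & @htotal H (nth x0 s i) (nth x0 s j)].

Definition clique_num_le (H : trigraph) (k : nat) : Prop :=
  forall S : {set H}, {in S &, forall x y, x != y -> @htotal H x y} -> #|S| <= k.

Definition real_triangle_free (H : trigraph) : Prop :=
  forall x y z : H, ~ [/\ tblack x y, tblack y z & tblack x z].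

(** A vertex is a pair (i, k): the k-th vertex (from the left, 0-based) of layer L_i. *)
Definition vert := (nat * nat)%type.
(** The record of a vertex: (index of its parent in the previous layer,
    B = vertices joined by black edges upward, R = vertices joined by red edges upward). *)
Definition vrec := (nat * seq vert * seq vert)%type.
Definition root_rec : vrec := (0, [::], [::]).
Definition recPar (r : vrec) : nat := r.1.1.
Definition recB (r : vrec) : seq vert := r.1.2.
Definition recR (r : vrec) : seq vert := r.2.

(** [Ls] is a list of constructed layers L_0, ..., L_m. *)
Definition recL (Ls : seq (seq vrec)) (v : vert) : vrec := nth root_rec (nth [::] Ls v.1) v.2.
Definition validL (Ls : seq (seq vrec)) (v : vert) : bool := v.2 < size (nth [::] Ls v.1).
Definition blackL (Ls : seq (seq vrec)) (x y : vert) : bool :=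
  [&& validL Ls x, validL Ls y &
   [|| (x.1 == y.1) && ((x.2.+1 == y.2) || (y.2.+1 == x.2)),
       y \in recB (recL Ls x) | x \in recB (recL Ls y)]].
Definition redL (Ls : seq (seq vrec)) (x y : vert) : bool :=
  [&& validL Ls x, validL Ls y &
   (y \in recR (recL Ls x)) || (x \in recR (recL Ls y))].
Definition tadjL (Ls : seq (seq vrec)) (x y : vert) : bool := blackL Ls x y || redL Ls x y.

Definition verts_lt (Ls : seq (seq vrec)) (i : nat) : seq vert :=
  flatten [seq [seq (j, k) | k <- iota 0 (size (nth [::] Ls j))] | j <- iota 0 i].

Definition Nup (Ls : seq (seq vrec)) (u : vert) : seq vert :=
  rcons [seq w <- verts_lt Ls u.1 | tadjL Ls u w] u.

Fixpoint splits3 (s : seq vert) : seq (seq vert * seq vert) :=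
  match s with
  | [::] => [:: ([::], [::])]
  | x :: s' => let r := splits3 s' in
      r ++ [seq (x :: p.1, p.2) | p <- r] ++ [seq (p.1, x :: p.2) | p <- r]
  end.

Definition pairsL (t : nat) (Ls : seq (seq vrec)) (u : vert) : seq (seq vert * seq vert) :=
  [seq p <- splits3 (Nup Ls u) | pairwise (redL Ls) p.1 & size p.1 + size p.2 <= t].

(** The paper does not fix the order in which the pairs (B,R) are processed;
    it is a parameter [ord], required to be a permutation (see [valid_order]). *)
Definition order_fn := vert -> seq (seq vert * seq vert) -> seq (seq vert * seq vert).
Definition valid_order (ord : order_fn) : Prop := forall u s, perm_eq (ord u s) s.

Definition next_layer (ord : order_fn) (t : nat) (Ls : seq (seq vrec)) (i : nat) : seq vrec :=
  flatten [seq flatten [seq [:: (k, p.1, p.2); (k, [::], [::])]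
                       | p <- ord (i, k) (pairsL t (Ls : seq (seq vrec)) (i, k))]
          | k <- iota 0 (size (nth [::] Ls i))].

Fixpoint layers (ord : order_fn) (t : nat) (n : nat) : seq (seq vrec) :=
  match n with
  | 0 => [:: [:: root_rec]]
  | n'.+1 => let Ls := layers ord t n' in rcons (Ls : seq (seq vrec)) (next_layer ord t Ls n')
  end.

Definition Gvert ord t (v : vert) : bool := validL (layers ord t v.1) v.
Definition Gblack ord t (x y : vert) : bool := blackL (layers ord t (maxn x.1 y.1)) x y.
Definition Gred ord t (x y : vert) : bool := redL (layers ord t (maxn x.1 y.1)) x y.

Definition Gchild ord t (v u : vert) : bool :=
  [&& Gvert ord t v, v.1 == u.1.+1 & recPar (recL (layers ord t v.1) v) == u.2].

Definition downward_path ord t (u : vert) (p : nat -> vert) : Prop :=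
  p 0 = u /\ forall n, Gchild ord t (p n.+1) (p n).

Definition Hfree_in ord t (H : trigraph) (X : vert -> Prop) : Prop :=
  ~ exists f : H -> vert, [/\ injective f, forall x, X (f x) &
      forall x y : H, x != y ->
        atype (@tblack H) (@tred H) x y = atype (Gblack ord t) (Gred ord t) (f x) (f y)].

(* Suppose every downward path from [u] meets [X] at least [|V(H)|] times; we embed [H]
   into [G'_t[X]].  The embedding is built below a vertex [w] of the tree while a clique [K]
   of [H] is already embedded in [N^up[w]] and the vertices [S] still to be placed form a
   union of components of [H - K].  Chordality provides [h] in [S] adjacent to every vertex
   of [K] seen by its component; its neighbours [A] in [K] form a clique with [h], so
   [|A| <= t], and those joined to [h] by black edges are pairwise red because the real
   graph is triangle-free.  Going down through the children [v_{B,R}] where [B] and [R] are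
   the images of the black and red neighbours of [h] in [A], we meet [X] at a vertex with
   exactly the adjacencies required of the image of [h].  The vertices of [S] seeing exactly
   [A] in [K] are then embedded below it with the clique [h + A], and the others below [w]
   with [K]: they end up in other subtrees of [w], since the child of [w] above each image
   records the part of [K] its component sees. *)

From mathcomp Require Import all_boot zify.
From Stdlib Require Import Classical_Prop.
Set Implicit Arguments. Unset Strict Implicit. Unset Printing Implicit Defensive.

(* [lia] is much faster once the non-arithmetic hypotheses are cleared. *)
Ltac nlia :=
  repeat match goal with h := _ |- _ => clearbody h end;
  repeat match goal with
  | h : ?T |- _ =>
      lazymatch type of T with Prop => idtac | _ => fail end;
      lazymatch T with
      | is_true (leq _ _) => fail
      | @eq ?A _ _ => tryif unify A nat then fail else clear h
      | ~ @eq ?A _ _ => tryif unify A nat then fail else clear h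
      | _ => clear h
      end
  end;
  lia.

Lemma classic_ex_min (P : nat -> Prop) n : P n -> exists m, P m /\ forall m', m' < m -> ~ P m'.
Proof.
elim/ltn_ind: n => n IH hn.
case: (classic (exists m', m' < n /\ P m')) => [[m' [h1 h2]]|hno]; first exact: IH h2.
by exists n; split => // m' hm hp; apply: hno; exists m'.
Qed.

Lemma classic_ex_max (P : nat -> Prop) b n : P n -> n <= b ->
  exists m, [/\ P m, m <= b & forall m', m < m' <= b -> ~ P m'].
Proof.
move=> hn hb.
have [j [[hjb hPj] hmin]] := @classic_ex_min (fun j => j <= b /\ P (b - j)) (b - n)
  (conj (leq_subr n b) (ecast k (P k) (esym (subKn hb)) hn)).
exists (b - j); split => //; first exact: leq_subr.
move=> m' /andP [h1 h2] hp; apply: (hmin (b - m')); first lia.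
by rewrite subKn // leq_subr.
Qed.

(** * Chordal graphs *)

Section Chordal.
Variable H : trigraph.
Local Notation adj := (@htotal H).
Implicit Types (S K : {set H}) (a b k : H) (f g : nat -> H).

Lemma htotal_sym : symmetric adj.
Proof. by move=> x y; rewrite /htotal tblack_sym tred_sym. Qed.

Definition is_clique K := {in K &, forall x y, x != y -> adj x y}.

Definition erel S : rel H := fun x y => [&& x \in S, y \in S & adj x y].
Definition conn S := connect (erel S).

Lemma conn_sym S : symmetric (conn S).
Proof. by apply/sym_connect_sym => x y; rewrite /erel htotal_sym andbCA. Qed.

Lemma conn_edge S a b : a \in S -> b \in S -> adj a b -> conn S a b.
Proof. by move=> ha hb hab; apply: connect1; rewrite /erel ha hb. Qed.

Definition attach S K s := [set k in K | [exists s', conn S s s' && adj s' k]].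

Lemma attach_conn S K a b : conn S a b -> attach S K a = attach S K b.
Proof.
move=> hab; apply/setP => k; rewrite !inE; congr (_ && _).
apply/existsP/existsP => [[s' /andP [h1 h2]]|[s' /andP [h1 h2]]]; exists s'; rewrite h2 andbT.
- by apply: connect_trans h1; rewrite -/(conn S b a) conn_sym.
- exact: connect_trans h1.
Qed.

Lemma attach_edge S K a b : a \in S -> b \in S -> adj a b -> attach S K a = attach S K b.
Proof. by move=> ha hb hab; apply/attach_conn/conn_edge. Qed.

Lemma attach_self S K s k : k \in K -> adj s k -> k \in attach S K s.
Proof.
by move=> hk hsk; rewrite inE hk; apply/existsP; exists s; rewrite hsk andbT; apply: connect0.
Qed.

Lemma attach_sub S K s : attach S K s \subset K.
Proof. by apply/subsetP => k; rewrite inE => /andP []. Qed.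

Lemma attach_restrict S S' K a : S' \subset S ->
  (forall x y, x \in S' -> y \in S -> adj x y -> y \in S') ->
  a \in S' -> attach S' K a = attach S K a.
Proof.
move=> hsub hcl ha.
have conn_eq b : conn S' a b = conn S a b.
  apply/idP/idP => /connectP [p hp ->]; apply/connectP; exists p => //.
    by apply: sub_path hp => x y /and3P [hx hy hxy]; rewrite /erel !(subsetP hsub) ?hxy.
  elim: p a ha hp => //= y p IH a ha /andP [/and3P [_ hy hay] hp].
  have hy' : y \in S' by apply: hcl hay.
  by rewrite /erel ha hy' hay /=; apply: IH.
apply/setP => k; rewrite !inE; congr (_ && _).
by apply: eq_existsb => s'; rewrite conn_eq.
Qed.

Definition walk S f r :=
  (forall i, i <= r -> f i \in S) /\ (forall i, i < r -> adj (f i) (f i.+1)).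

Lemma conn_walk S a b : a \in S -> conn S a b ->
  exists f r, [/\ f 0 = a, f r = b & walk S f r].
Proof.
move=> ha /connectP [p /(pathP a) hp ->].
exists (nth a (a :: p)), (size p); split => //; first by rewrite (last_nth a).
split=> [[|i] hi //|i hi]; last by case/and3P: (hp i hi).
by case/and3P: (hp i hi).
Qed.

Lemma walk_conn S f r : walk S f r -> conn S (f 0) (f r).
Proof.
elim: r => [|r IH] [hS hadj]; first exact: connect0.
apply: connect_trans (IH _) (conn_edge _ _ _); rewrite ?hS ?hadj //.
by split=> i hi; [apply: hS | apply: hadj]; lia.
Qed.

Definition shortcut f (i d : nat) (l : nat) := if l <= i then f l else f (l + d).

Lemma walk_shortcut S f r i d : walk S f r -> i + d < r -> adj (f i) (f (i + d).+1) ->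
  walk S (shortcut f i d) (r - d).
Proof.
move=> [h1 h2] hid hadj; split=> l hl; rewrite /shortcut.
  by case: ifP => hli; apply: h1; lia.
case: (leqP l i) => ha; case: (leqP l.+1 i) => hb.
- by apply: h2; lia.
- by have -> : l = i by lia.
- by lia.
- by rewrite addSn; apply: h2; lia.
Qed.

Lemma walk_prefix S f r r' : walk S f r -> r' <= r -> walk S f r'.
Proof. by case=> h1 h2 hr; split=> i hi; [apply: h1 | apply: h2]; apply: leq_trans hr. Qed.

Definition induced_path f r :=
  (forall i j, i.+1 < j <= r -> ~~ adj (f i) (f j)) /\ (forall i j, i < j <= r -> f i != f j).

Lemma shortest_walk_to S k a b : a \in S -> conn S a b -> adj b k ->
  exists f r, [/\ f 0 = a, walk S f r, induced_path f r, adj (f r) k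
                & forall i, i < r -> ~~ adj (f i) k].
Proof.
move=> ha hab hbk; have [f0 [r0 [hf00 hf0r hw0]]] := conn_walk ha hab.
pose P r := exists f, [/\ f 0 = a, walk S f r & adj (f r) k].
have [r [[f [hf0 hw hfr]] hmin]] : exists r, P r /\ forall r', r' < r -> ~ P r'.
  by apply: (@classic_ex_min P r0); exists f0; rewrite hf0r.
have shorter i d : i + d < r -> 0 < d -> adj (f i) (f (i + d).+1) -> False.
  move=> hid hd hadj; apply: (hmin (r - d)); first lia.
  exists (shortcut f i d); split; first by rewrite /shortcut leq0n.
    exact: walk_shortcut.
  by rewrite /shortcut ifN -?ltnNge ?subnK //; lia.
have far i : i < r -> ~~ adj (f i) k.
  move=> hi; apply/negP => hik; apply: (hmin i hi).
  by exists f; split => //; apply: walk_prefix hw (ltnW hi).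
exists f, r; split=> //; split=> i j /andP [hij hjr].
- apply/negP => hadj; have e : (i + (j - i.+1)).+1 = j by lia.
  by apply: (shorter i (j - i.+1)); rewrite ?e //; lia.
- apply/eqP => e; case: (ltngtP j r) => hjr'; [|lia|].
  + have e' : i + (j - i) = j by lia.
    apply: (shorter i (j - i)); rewrite ?e' ?subn_gt0 // e.
    by case: hw => _; apply.
  + by move: (far i); rewrite e hjr' hfr -hjr' => /(_ hij).
Qed.

Hypothesis H_chordal : chordal H.

Lemma chordal_no_hole g n : 4 <= n ->
  (forall i j, i < n -> j < n -> g i = g j -> i = j) ->
  (forall i, i.+1 < n -> adj (g i) (g i.+1)) -> adj (g n.-1) (g 0) ->
  (forall i j, i.+1 < j < n -> (i, j) != (0, n.-1) -> ~~ adj (g i) (g j)) -> False.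
Proof.
move=> hn hinj hcons hlast hno.
pose s' := [seq g i | i <- iota 1 n.-1].
have hs : g 0 :: s' = [seq g i | i <- iota 0 n] by rewrite /s'; case: (n) hn.
have hsz : size (g 0 :: s') = n by rewrite hs size_map size_iota.
have hnth i : i < n -> nth (g 0) (g 0 :: s') i = g i.
  by move=> hi; rewrite hs (nth_map 0) ?size_iota // nth_iota.
have [||i [j [hi hj hij /andP [h1 h2] hadj]]] := @H_chordal (g 0) s' ltac:(by rewrite hsz).
- rewrite hs map_inj_in_uniq ?iota_uniq // => a b.
  by rewrite !mem_iota => ha hb; apply: hinj; lia.
- have hsz' : size s' = n.-1 by rewrite size_map size_iota.
  have hnth' i : i < n.-1 -> nth (g 0) s' i = g i.+1.
    by move=> hi; rewrite (nth_map 0) ?size_iota // nth_iota // add1n.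
  apply/(pathP (g 0)) => i; rewrite size_rcons hsz' => hi.
  have -> : nth (g 0) (g 0 :: rcons s' (g 0)) i = g i.
    by case: i hi => [|i] hi //=; rewrite nth_rcons hsz' ifT ?hnth' //; nlia.
  rewrite nth_rcons hsz'; case: ltnP => hi'; first by rewrite hnth' //; apply: hcons; nlia.
  have -> : i = n.-1 by nlia.
  by rewrite if_same.
- rewrite hsz in hi hj h1 h2; rewrite !hnth // in hadj.
  wlog hlt : i j hi hj hij h1 h2 hadj / i < j.
    move=> gen; case: (ltngtP i j) => hlt; [exact: (gen i j) | | by rewrite hlt eqxx in hij].
    by apply: (gen j i) => //; [rewrite eq_sym | rewrite htotal_sym].
  have hne : j != i.+1 by apply: contra h1 => /eqP ->; rewrite modn_small ?eqxx //; nlia.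
  apply: (negP (hno i j _ _)) hadj; first by rewrite hj andbT ltn_neqAle eq_sym hne.
  apply: contra h2 => /eqP [-> ->]; rewrite prednK ?modnn //; nlia.
Qed.

(* The last vertex [f i0] of the path adjacent to [k0] starts a hole
   [f i0, ..., f r, k, k0]. *)
Lemma chordal_no_detour S f r k0 k : walk S f r -> induced_path f r ->
  k0 \notin S -> k \notin S -> k0 != k -> adj k0 k ->
  adj (f 0) k0 -> ~~ adj (f r) k0 -> adj (f r) k -> (forall i, i < r -> ~~ adj (f i) k) -> False.
Proof.
move=> [fS fadj] [fchord finj] hk0S hkS hk0k hadj0k h0 hr hrk hfar.
have [i0 [hi0 hi0r hi0max]] := classic_ex_max (P := fun i => adj (f i) k0) h0 (leq0n r).
have hi0r' : i0 < r by rewrite ltn_neqAle hi0r andbT; apply: contraNneq hr => <-.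
pose L := r - i0; have eL : L = r - i0 by [].
pose g l := if l <= L then f (i0 + l) else if l == L.+1 then k else k0.
have gS l : (g l \in S) = (l <= L).
  rewrite /g; case: leqP => hl; first by rewrite fS //; nlia.
  by case: eqP => _; apply: negbTE.
have hL : 0 < L by rewrite subn_gt0.
apply: (@chordal_no_hole g L.+3); first by rewrite !ltnS.
- move=> i j hi hj e; have := gS i; rewrite e gS.
  case: (leqP i L) => hiL; case: (leqP j L) => hjL // _.
  + move: e; rewrite /g hiL hjL => e; case: (ltngtP i j) => // hlt.
    * by have /negP[] := finj (i0 + i) (i0 + j) ltac:(nlia); rewrite e.
    * by have /negP[] := finj (i0 + j) (i0 + i) ltac:(nlia); rewrite e.
  + move: e; rewrite /g leqNgt hiL leqNgt hjL /=.
    case: (eqVneq i L.+1) => hi1; case: (eqVneq j L.+1) => hj1; rewrite ?hi1 ?hj1 //.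
    * by move=> e; move: hk0k; rewrite e eqxx.
    * by move=> e; move: hk0k; rewrite e eqxx.
    * by move=> _; move/eqP in hi1; move/eqP in hj1; nlia.
- move=> i hi; rewrite /g; case: (ltngtP i L) => hiL.
  + by rewrite addnS; apply: fadj; nlia.
  + have -> : i = L.+1 by nlia.
    by rewrite eqxx (gtn_eqF (ltnSn _)) htotal_sym.
  + by rewrite hiL eqxx eL subnKC.
- by rewrite /g /= ltnNge leqnSn /= gtn_eqF ?addn0 // htotal_sym.
- move=> i j /andP [hij hjn] hne; rewrite /g.
  have hiL : i <= L by nlia.
  rewrite hiL; case: (leqP j L) => hjL; first by apply: fchord; nlia.
  case: eqP => hj1; first by apply: hfar; nlia.
  have hj2 : j = L.+2 by nlia.
  apply/negP => hadj; apply: (hi0max (i0 + i)) hadj.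
  have : i != 0 by apply: contraNneq hne => ->; rewrite hj2.
  by rewrite -lt0n => hi; apply/andP; split; nlia.
Qed.

(* Choose [h] in the component of [s] with the most neighbours in [K]. *)
Lemma complete_vertex S K s : is_clique K -> [disjoint S & K] -> s \in S ->
  exists h, [/\ h \in S, conn S s h &
    forall k s', k \in K -> conn S s s' -> adj s' k -> adj h k].
Proof.
move=> hK hdis hs.
pose NK x := [set k in K | adj x k].
have hsC : (s \in S) && conn S s s by rewrite hs; apply: connect0.
have [h /andP [hS hsh] hmax] :=
  @arg_maxnP H s [pred x | (x \in S) && conn S s x] (fun x => #|NK x|) hsC.
exists h; split => // k s' hk hss' hs'k; apply: contraT => hhk.
have notS x : x \in K -> x \notin S by move=> hx; rewrite (disjointFl hdis hx).
have [f [r [hf0 hw hind hfr hfar]]] :=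
  shortest_walk_to hS (connect_trans (etrans (conn_sym S h s) hsh) hss') hs'k.
have hzC : (f r \in S) && conn S s (f r).
  by rewrite hw.1 //=; apply: connect_trans hsh _; rewrite -hf0; apply: walk_conn.
have [k0] : exists2 k0, k0 \in NK h & k0 \notin NK (f r).
  apply/subsetPn; apply: contraTN (hmax _ hzC) => hsub; rewrite -ltnNge.
  by apply: proper_card; rewrite properE hsub; apply/subsetPn; exists k; rewrite !inE hk.
rewrite !inE => /andP [hk0K hhk0]; rewrite hk0K /= => hk0z.
exfalso; apply: (chordal_no_detour hw hind (notS _ hk0K) (notS _ hk)) hfr hfar.
- by apply: contraNneq hhk => <-.
- by apply: hK => //; apply: contraNneq hhk => <-.
- by rewrite hf0.
- exact: hk0z.
Qed.

End Chordal.

(** * The construction of [G'_t] and [T'_t] *)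

Lemma flatten_map_flatten (A B C : Type) (F : A -> B -> seq C) (G : A -> seq B) (s : seq A) :
  flatten [seq flatten [seq F a b | b <- G a] | a <- s] =
  flatten [seq F ab.1 ab.2 | ab <- flatten [seq [seq (a, b) | b <- G a] | a <- s]].
Proof.
elim: s => //= a s IH; rewrite map_cat flatten_cat IH; congr (_ ++ _).
by rewrite -map_comp.
Qed.

Lemma size_flatten_pairs (A B : Type) (f g : A -> B) (s : seq A) :
  size (flatten [seq [:: f x; g x] | x <- s]) = 2 * size s.
Proof. by elim: s => //= x s ->; rewrite mulnS. Qed.

Lemma nth_flatten_pairs (A B : Type) (f g : A -> B) (s : seq A) (a0 : A) (b0 : B) m :
  m < 2 * size s ->
  nth b0 (flatten [seq [:: f x; g x] | x <- s]) m =
  if odd m then g (nth a0 s m./2) else f (nth a0 s m./2).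
Proof.
elim: s m => [|x s IH] m; first by rewrite muln0.
case: m => [|[|m]] //= hm.
by rewrite IH ?negbK; [case: (odd m) | rewrite mulnS !ltnS in hm].
Qed.

Lemma uniq_size_filter_le (T : eqType) (a : pred T) (s : seq T) x :
  uniq s -> {subset [seq y <- s | ~~ a y] <= [:: x]} -> size s <= (size [seq y <- s | a y]).+1.
Proof.
move=> hs hsub; rewrite -(count_predC a) size_filter -addn1 leq_add2l.
by rewrite -size_filter; apply: uniq_leq_size hsub; rewrite filter_uniq.
Qed.

Lemma splits3_subset (s : seq vert) p : p \in splits3 s ->
  {subset p.1 <= s} /\ {subset p.2 <= s}.
Proof.
elim: s p => [|x s IH] p /=; first by rewrite inE => /eqP ->.
have sub y : y \in s -> y \in x :: s by rewrite inE => ->; rewrite orbT.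
rewrite !mem_cat => /or3P [/IH [h1 h2]|/mapP [q /IH [h1 h2] ->]|/mapP [q /IH [h1 h2] ->]] /=.
- by split=> y; [move/h1 | move/h2] => /sub.
- by split=> y; [case/predU1P => [->|/h1/sub] //; apply: mem_head | move/h2/sub].
- by split=> y; [move/h1/sub | case/predU1P => [->|/h2/sub] //; apply: mem_head].
Qed.

Lemma mem_splits3_filter (PB PR : pred vert) (s : seq vert) :
  (forall x, PB x -> ~~ PR x) -> (filter PB s, filter PR s) \in splits3 s.
Proof.
move=> hd; elim: s => [|x s IH] /=; first by rewrite inE.
rewrite !mem_cat; case hB: (PB x); case hR: (PR x).
- by move: (hd x hB); rewrite hR.
- by rewrite (map_f (fun p => (x :: p.1, p.2)) IH) orbT.
- by rewrite (map_f (fun p => (p.1, x :: p.2)) IH) !orbT.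
- by rewrite IH.
Qed.

Lemma mem_verts_lt Ls i (y : vert) :
  (y \in verts_lt Ls i) = (y.1 < i) && (y.2 < size (nth [::] Ls y.1)).
Proof.
case: y => a b /=; apply/flattenP/andP => [[s /mapP [j hj ->] /mapP [k hk [-> ->]]]|[ha hb]].
  by rewrite mem_iota in hj; rewrite mem_iota in hk; split; lia.
exists [seq (a, k) | k <- iota 0 (size (nth [::] Ls a))]; apply/mapP.
- by exists a; rewrite ?mem_iota.
- by exists b; rewrite ?mem_iota.
Qed.

Lemma uniq_verts_lt Ls i : uniq (verts_lt Ls i).
Proof.
elim: i => [|i IH] //.
rewrite /verts_lt -addn1 iotaD map_cat flatten_cat /= cats0 cat_uniq -/(verts_lt Ls i) IH /=.
rewrite map_inj_uniq ?iota_uniq; last by move=> a b [].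
by rewrite andbT; apply/hasPn => y /mapP [k _ ->]; rewrite mem_verts_lt /= ltnn.
Qed.

Lemma uniq_Nup Ls u : uniq (Nup Ls u).
Proof.
rewrite /Nup rcons_uniq filter_uniq ?uniq_verts_lt // andbT.
by rewrite mem_filter mem_verts_lt ltnn andbF.
Qed.

Lemma Nup_self Ls u : u \in Nup Ls u.
Proof. by rewrite /Nup mem_rcons mem_head. Qed.

Lemma atype_sym (T : Type) (b r : rel T) : symmetric b -> symmetric r ->
  forall x y, atype b r x y = atype b r y x.
Proof. by move=> hb hr x y; rewrite /atype hb hr. Qed.

Lemma atype_none (T : Type) (b r : rel T) x y : ~~ b x y -> ~~ r x y -> atype b r x y = ANone.
Proof. by rewrite /atype => /negbTE -> /negbTE ->. Qed.

Section Layers.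
Variables (ord : order_fn) (t : nat).
Hypothesis ord_perm : valid_order ord.

Lemma size_layers n : size (layers ord t n) = n.+1.
Proof. by elim: n => //= n IH; rewrite size_rcons IH. Qed.

Definition layer j := nth [::] (layers ord t j) j.

Lemma nth_layers m j : j <= m -> nth [::] (layers ord t m) j = layer j.
Proof.
move=> hj; elim: m hj => [|m IH]; first by rewrite leqn0 => /eqP ->.
rewrite leq_eqVlt => /orP [/eqP <- //|hm].
by rewrite /= nth_rcons size_layers hm IH.
Qed.

Definition valid (v : vert) := v.2 < size (layer v.1).
Definition rec_of (v : vert) := nth root_rec (layer v.1) v.2.
Definition up_nbrs (v : vert) := recB (rec_of v) ++ recR (rec_of v).

Definition gblack (x y : vert) : bool :=
  [&& valid x, valid y &
   [|| (x.1 == y.1) && ((x.2.+1 == y.2) || (y.2.+1 == x.2)),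
       y \in recB (rec_of x) | x \in recB (rec_of y)]].
Definition gred (x y : vert) : bool :=
  [&& valid x, valid y & (y \in recR (rec_of x)) || (x \in recR (rec_of y))].

Lemma validL_layers m x : x.1 <= m -> validL (layers ord t m) x = valid x.
Proof. by move=> hx; rewrite /validL nth_layers. Qed.

Lemma recL_layers m x : x.1 <= m -> recL (layers ord t m) x = rec_of x.
Proof. by move=> hx; rewrite /recL nth_layers. Qed.

Lemma blackL_layers m x y : x.1 <= m -> y.1 <= m -> blackL (layers ord t m) x y = gblack x y.
Proof. by move=> hx hy; rewrite /blackL !validL_layers // !recL_layers. Qed.

Lemma redL_layers m x y : x.1 <= m -> y.1 <= m -> redL (layers ord t m) x y = gred x y.
Proof. by move=> hx hy; rewrite /redL !validL_layers // !recL_layers. Qed.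

Lemma GblackE x y : Gblack ord t x y = gblack x y.
Proof. by rewrite /Gblack blackL_layers // ?leq_maxl ?leq_maxr. Qed.

Lemma GredE x y : Gred ord t x y = gred x y.
Proof. by rewrite /Gred redL_layers // ?leq_maxl ?leq_maxr. Qed.

Lemma gblack_sym : symmetric gblack.
Proof.
move=> x y; rewrite /gblack andbCA (eq_sym x.1) (orbC (x.2.+1 == _)).
by rewrite [X in _ || X]orbC.
Qed.

Lemma gred_sym : symmetric gred.
Proof. by move=> x y; rewrite /gred andbCA orbC. Qed.

Definition layer_pairs i :=
  flatten [seq [seq (k, p) | p <- ord (i, k) (pairsL t (layers ord t i) (i, k))]
          | k <- iota 0 (size (layer i))].

Lemma layer_succE i : layer i.+1 =
  flatten [seq [:: (kp.1, kp.2.1, kp.2.2); (kp.1, [::], [::])] | kp <- layer_pairs i].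
Proof.
rewrite /layer /= nth_rcons size_layers ltnn eqxx /next_layer nth_layers //.
exact: (flatten_map_flatten (fun k p => [:: (k, p.1, p.2); (k, [::], [::])])).
Qed.

Lemma mem_layer_pairs i k p :
  ((k, p) \in layer_pairs i) = (k < size (layer i)) && (p \in pairsL t (layers ord t i) (i, k)).
Proof.
apply/flattenP/andP => [[s /mapP [j hj ->] /mapP [q hq [-> ->]]]|[hk hp]].
  by rewrite (perm_mem (ord_perm _ _)) in hq; rewrite mem_iota in hj.
exists [seq (k, q) | q <- ord (i, k) (pairsL t (layers ord t i) (i, k))]; apply/mapP.
- by exists k; rewrite ?mem_iota.
- by exists p; rewrite ?(perm_mem (ord_perm _ _)).
Qed.

Lemma mem_Nup u y : y \in Nup (layers ord t u.1) u -> y = u \/ (y.1 < u.1 /\ valid y).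
Proof.
rewrite /Nup mem_rcons inE => /predU1P [->|]; first by left.
rewrite mem_filter mem_verts_lt => /and3P [_ h1 h2]; right.
by rewrite /valid -(nth_layers (ltnW h1)).
Qed.

Lemma up_nbrs_below v y : y \in up_nbrs v -> y.1 < v.1 /\ valid y.
Proof.
case: v => [[|i] k]; rewrite /up_nbrs /rec_of /=.
  by case: k => [|k]; rewrite /= ?nth_nil.
case: (ltnP k (size (layer i.+1))) => hk; last by rewrite nth_default.
rewrite layer_succE size_flatten_pairs in hk.
rewrite layer_succE (nth_flatten_pairs _ _ (0, ([::], [::]))) //.
have hk2 : k./2 < size (layer_pairs i) by rewrite ltn_half_double -mul2n.
case: (nth _ _ _) (mem_nth (0, ([::], [::])) hk2) => k' p.
rewrite mem_layer_pairs => /andP [hk']; rewrite mem_filter => /andP [_ /splits3_subset [s1 s2]].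
case: (odd k); rewrite /= ?mem_cat // => /orP [/s1|/s2] /(@mem_Nup (i, k')) [-> | [/ltnW]] //=.
Qed.

(* [v_{B,R}] for the pair [p = (B, R)] processed at [d] sits at position [2 * index] of the
   next layer, and [v'_{B,R}] right after it. *)
Definition child (d : vert) (p : seq vert * seq vert) : vert :=
  (d.1.+1, 2 * index (d.2, p) (layer_pairs d.1)).

Lemma child_spec d p : valid d -> p \in pairsL t (layers ord t d.1) d ->
  [/\ valid (child d p), rec_of (child d p) = (d.2, p.1, p.2) & ~~ odd (child d p).2].
Proof.
case: d => i k /= hv hp.
have hkp : (k, p) \in layer_pairs i by rewrite mem_layer_pairs; apply/andP.
have hidx : index (k, p) (layer_pairs i) < size (layer_pairs i) by rewrite index_mem.
rewrite /child /valid /rec_of /= layer_succE size_flatten_pairs ltn_pmul2l //.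
by rewrite (nth_flatten_pairs _ _ (0, ([::], [::]))) ?ltn_pmul2l // oddM mul2n doubleK nth_index.
Qed.

Lemma GchildE c d : Gchild ord t c d = [&& valid c, c.1 == d.1.+1 & recPar (rec_of c) == d.2].
Proof. by []. Qed.

Definition parent (v : vert) : vert := (v.1.-1, recPar (rec_of v)).
Definition anc (l : nat) (v : vert) : vert := iter (v.1 - l) parent v.

Lemma anc_layer l v : l <= v.1 -> (anc l v).1 = l.
Proof.
have iter_parent n : (iter n parent v).1 = v.1 - n.
  by elim: n => [|n IH] /=; [rewrite subn0 | rewrite IH subnS].
by move=> h; rewrite /anc iter_parent subKn.
Qed.

Lemma anc_id v : anc v.1 v = v.
Proof. by rewrite /anc subnn. Qed.

Lemma anc_anc l l' v : l <= l' <= v.1 -> anc l (anc l' v) = anc l v.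
Proof.
by case/andP=> h1 h2; rewrite {1}/anc anc_layer // /anc -iterD; congr iter; lia.
Qed.

Lemma GchildP c d : Gchild ord t c d -> [/\ parent c = d, c.1 = d.1.+1 & valid c].
Proof.
by rewrite GchildE => /and3P [hv /eqP h1 /eqP h2]; rewrite /parent h1 h2; case: d {h1 h2}.
Qed.

Lemma Gchild_anc c d : Gchild ord t c d -> anc d.1 c = d.
Proof. by case/GchildP => h1 h2 _; rewrite /anc h2 subSnn. Qed.

Lemma downward_path_layer w p : downward_path ord t w p -> forall n, (p n).1 = w.1 + n.
Proof.
case=> h0 hs; elim => [|n IH]; first by rewrite h0 addn0.
by case/GchildP: (hs n) => _ -> _; rewrite IH addnS.
Qed.

Lemma downward_path_anc w p : downward_path ord t w p ->
  forall n m, n <= m -> anc (w.1 + n) (p m) = p n.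
Proof.
move=> hp n; elim => [|m IH].
  by rewrite leqn0 => /eqP ->; rewrite -(downward_path_layer hp) anc_id.
rewrite leq_eqVlt => /orP [/eqP <-|hm]; first by rewrite -(downward_path_layer hp) anc_id.
rewrite -(@anc_anc _ (w.1 + m)); last by rewrite (downward_path_layer hp); lia.
by rewrite -(downward_path_layer hp m) (Gchild_anc (hp.2 m)) IH.
Qed.

Lemma up_nbrs_Nup c y : valid c -> y \in up_nbrs c -> y \in Nup (layers ord t c.1) c.
Proof.
move=> hc hy; have [h1 h2] := up_nbrs_below hy.
rewrite /Nup mem_rcons inE mem_filter mem_verts_lt h1 (nth_layers (ltnW h1)).
rewrite (h2 : y.2 < size (layer y.1)) orbC /=.
rewrite /tadjL blackL_layers ?redL_layers ?(ltnW h1) // /gblack /gred hc h2 /=.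
by move: hy; rewrite mem_cat => /orP [] ->; rewrite ?orbT.
Qed.

Lemma gblack_below x v : valid x -> valid v -> v.1 < x.1 -> gblack x v = (v \in recB (rec_of x)).
Proof.
move=> hx hv hl; rewrite /gblack hx hv (gtn_eqF hl) /=; case: (v \in _) => //=.
apply/negP => hin; have [] := @up_nbrs_below v x; first by rewrite mem_cat hin.
by rewrite ltnNge (ltnW hl).
Qed.

Lemma gred_below x v : valid x -> valid v -> v.1 < x.1 -> gred x v = (v \in recR (rec_of x)).
Proof.
move=> hx hv hl; rewrite /gred hx hv /=; case: (v \in _) => //=.
apply/negP => hin; have [] := @up_nbrs_below v x; first by rewrite mem_cat hin orbT.
by rewrite ltnNge (ltnW hl).
Qed.

(* Vertices at even positions, the [v_{B,R}], are never consecutive in their layer. *)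
Lemma gat_none x v : (x.1 != v.1) || ~~ odd x.2 && ~~ odd v.2 ->
  v \notin up_nbrs x -> x \notin up_nbrs v -> atype gblack gred x v = ANone.
Proof.
move=> hxv; rewrite /up_nbrs !mem_cat !negb_or => /andP [hB hR] /andP [hB' hR'].
have hne : ((x.1 == v.1) && ((x.2.+1 == v.2) || (v.2.+1 == x.2))) = false.
  case: eqP hxv => //= _ /andP [ex ev].
  by apply/negbTE; rewrite negb_or; apply/andP; split; apply/eqP => e;
    [move: ev | move: ex]; rewrite -e /= ?ex ?ev.
apply: atype_none; rewrite /gblack /gred;
  by rewrite !(hne, negbTE hB, negbTE hB', negbTE hR, negbTE hR') !andbF.
Qed.

Section Carry.
Variables sB sR : seq vert.
Hypothesis sBR_disj : forall x, x \in sB -> x \notin sR.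
Hypothesis size_sBR : size sB + size sR <= t.
Hypothesis sB_red : {in sB &, forall a b, a != b -> gred a b}.

Definition carries d := valid d /\ {subset sB ++ sR <= Nup (layers ord t d.1) d}.

Definition pattern d :=
  (filter (mem sB) (Nup (layers ord t d.1) d), filter (mem sR) (Nup (layers ord t d.1) d)).

Definition carry_step d := child d (pattern d).

Lemma pattern_pairsL d : carries d -> pattern d \in pairsL t (layers ord t d.1) d.
Proof.
case=> hv hsub; rewrite /pattern; set N := Nup _ d.
have layer_N y : y \in N -> y.1 <= d.1 by case/mem_Nup => [->|[/ltnW]].
rewrite mem_filter mem_splits3_filter ?andbT; last by move=> x; apply: sBR_disj.
apply/andP; split.
  apply: (@sub_in_pairwise _ (mem (filter (mem sB) N)) [rel x y | x != y]); last first.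
  - by rewrite -uniq_pairwise filter_uniq ?uniq_Nup.
  - exact: allss.
  move=> a b /[!mem_filter] /andP [ha hNa] /andP [hb hNb] /= hab.
  by rewrite redL_layers ?layer_N //; apply: sB_red.
have no_common : count (predI (mem sB) (mem sR)) N = 0.
  apply/eqP; rewrite -leqn0 -(count_pred0 N).
  by apply: sub_count => x /andP [/sBR_disj/negP hx /hx].
rewrite !size_filter -count_predUI no_common addn0 -size_filter.
apply: leq_trans size_sBR; rewrite -size_cat.
apply: uniq_leq_size; first by rewrite filter_uniq ?uniq_Nup.
by move=> x; rewrite mem_filter mem_cat => /andP [].
Qed.

Lemma carry_step_spec d : carries d ->
  [/\ Gchild ord t (carry_step d) d, ~~ odd (carry_step d).2, recB (rec_of (carry_step d)) =i sB,
      recR (rec_of (carry_step d)) =i sR & carries (carry_step d)].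
Proof.
move=> hd; have [hv hrec hodd] := child_spec hd.1 (pattern_pairsL hd).
have hB : recB (rec_of (carry_step d)) =i sB.
  move=> x; rewrite hrec mem_filter andb_idr // => hx.
  by apply: hd.2; rewrite mem_cat (hx : x \in sB).
have hR : recR (rec_of (carry_step d)) =i sR.
  move=> x; rewrite hrec mem_filter andb_idr // => hx.
  by apply: hd.2; rewrite mem_cat (hx : x \in sR) orbT.
split => //; first by rewrite GchildE hv hrec !eqxx.
split=> // x; rewrite mem_cat -hB -hR -mem_cat; exact: up_nbrs_Nup.
Qed.

Definition carry_path (w : vert) (n : nat) := iter n carry_step w.

Lemma carry_path_carries w n : carries w -> carries (carry_path w n).
Proof. by move=> hw; elim: n => //= n IH; case: (carry_step_spec IH). Qed.

Lemma carry_path_down w : carries w -> downward_path ord t w (carry_path w).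
Proof. by move=> hw; split => // n; case: (carry_step_spec (carry_path_carries n hw)). Qed.

End Carry.

Section Hits.
Variable X : vert -> Prop.

Definition many_hits (w : vert) (m : nat) : Prop :=
  forall p, downward_path ord t w p ->
  exists s : seq nat, [/\ uniq s, forall j, j \in s -> 0 < j /\ X (p j) & m <= size s].

Lemma many_hits_le w m m' : m' <= m -> many_hits w m -> many_hits w m'.
Proof.
move=> hm hq p /hq [s [h1 h2 h3]]; exists s; split => //; exact: leq_trans h3.
Qed.

Definition splice (c : nat -> vert) (n : nat) (q : nat -> vert) (i : nat) : vert :=
  if i <= n then c i else q (i - n).

Lemma splice_down w c n q : downward_path ord t w c -> downward_path ord t (c n) q ->
  downward_path ord t w (splice c n q).
Proof.
move=> [hc0 hc] [hq0 hq]; split => [|i]; rewrite /splice //.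
case: (ltngtP i n) => h; first exact: hc.
- by rewrite subSn 1?ltnW //; exact: hq.
- by rewrite h subSnn -hq0; exact: hq.
Qed.

Lemma first_hit w m (c : nat -> vert) : downward_path ord t w c -> many_hits w m.+1 ->
  exists n, [/\ 0 < n, X (c n) & many_hits (c n) m].
Proof.
move=> hc hq; have [[|j0 s] [_ hs hsz]] := hq c hc; first by [].
have [n [[hn hxn] hmin]] := classic_ex_min (P := fun j => 0 < j /\ X (c j)) (hs j0 (mem_head _ _)).
exists n; split => // q hqd.
have [s' [hu' hs' hsz']] := hq _ (splice_down hc hqd).
exists [seq j - n | j <- s' & n < j]; split.
- rewrite map_inj_in_uniq ?filter_uniq //.
  by move=> a b /[!mem_filter] /andP [ha _] /andP [hb _]; nlia.
- move=> _ /mapP [j /[!mem_filter] /andP [hj1 hj2] ->]; split; first by rewrite subn_gt0.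
  by have [_] := hs' j hj2; rewrite /splice leqNgt hj1.
- rewrite size_map -ltnS; apply: (leq_trans hsz'); apply: (uniq_size_filter_le (x := n) hu').
  move=> j; rewrite mem_filter -leqNgt => /andP [hjn hj].
  have [hj0 hxj] := hs' j hj; rewrite /splice hjn in hxj.
  rewrite inE eqn_leq hjn /= leqNgt; apply/negP => hjn'.
  exact: (hmin j hjn' (conj hj0 hxj)).
Qed.

Section Root.
Variables (u : vert) (m : nat).
Hypothesis hits : forall p, downward_path ord t u p ->
  exists s : seq nat, [/\ uniq s, forall n, n \in s -> X (p n) & m <= size s].

Lemma many_hits_notX : ~ X u -> many_hits u m.
Proof.
move=> hXu p hp; have [s [hs hX hm]] := hits hp; exists s; split => // j hj.
split; last exact: hX.
by rewrite lt0n; apply/eqP => j0; apply: hXu; rewrite -hp.1 -j0; apply: hX.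
Qed.

Lemma many_hits_pred : many_hits u m.-1.
Proof.
move=> p hp; have [s [hs hX hm]] := hits hp.
exists [seq j <- s | 0 < j]; split; first by rewrite filter_uniq.
  by move=> j; rewrite mem_filter => /andP [hj /hX].
have hsub : {subset [seq j <- s | ~~ (0 < j)] <= [:: 0]}.
  by move=> j; rewrite mem_filter lt0n negbK inE => /andP [].
by rewrite -subn1 leq_subLR add1n; apply: leq_trans hm (uniq_size_filter_le hs hsub).
Qed.

End Root.

End Hits.

(** * Embedding [H] *)

Section Embedding.
Variable H : trigraph.
Hypotheses (H_chordal : chordal H) (H_clique : clique_num_le H t.+1)
           (H_real_tf : real_triangle_free H).
Variable X : vert -> Prop.

Local Notation adj := (@htotal H).
Local Notation hat := (atype (@tblack H) (@tred H)).
Local Notation gat := (atype gblack gred).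
Implicit Types (S K A : {set H}) (phi psi : H -> vert).

Lemma hat_sym a b : hat a b = hat b a.
Proof. exact: atype_sym (@tblack_sym H) (@tred_sym H) a b. Qed.

Lemma gat_sym x y : gat x y = gat y x.
Proof. exact: atype_sym gblack_sym gred_sym x y. Qed.

Lemma hat_none a b : ~~ adj a b -> hat a b = ANone.
Proof. by rewrite /htotal negb_or => /andP []; apply: atype_none. Qed.

Definition faithful_on (A B : {set H}) psi :=
  forall a b, a \in A -> b \in B -> a != b -> hat a b = gat (psi a) (psi b) /\ psi a != psi b.

Lemma faithful_onC (A B : {set H}) psi : faithful_on A B psi -> faithful_on B A psi.
Proof.
move=> hf a b ha hb hab; have [] := hf b a hb ha; first by rewrite eq_sym.
by rewrite hat_sym gat_sym eq_sym.
Qed.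

Lemma faithful_on_inj A psi : faithful_on A A psi -> {in A &, injective psi}.
Proof. by move=> hf a b ha hb e; apply/eqP/negPn/negP => /(hf a b ha hb) [_]; rewrite e eqxx. Qed.

Record embedding_problem S K phi w : Prop := {
  ep_clique : is_clique K;
  ep_disjoint : [disjoint S & K];
  ep_closed : forall s y, s \in S -> adj s y -> y \in S :|: K;
  ep_Nup : forall k, k \in K -> phi k \in Nup (layers ord t w.1) w;
  ep_faithful : faithful_on K K phi;
  ep_valid : valid w }.

Definition placed_below w v := [/\ X v, w.1 < v.1, anc w.1 v = w, ~~ odd v.2 & valid v].

(* By [emb_attach], the child of [w] above [phi' s] records which part of [K] the
   component of [s] sees; this keeps the subtrees used for different components apart. *)
Record embedding S K phi w phi' : Prop := {
  emb_id : forall y, y \notin S -> phi' y = phi y;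
  emb_placed : forall s, s \in S -> placed_below w (phi' s);
  emb_faithful : faithful_on S (S :|: K) phi';
  emb_up : forall s v, s \in S -> v \in up_nbrs (phi' s) -> exists2 y, y \in S :|: K & v = phi' y;
  emb_attach : forall s v, s \in S ->
    v \in up_nbrs (anc w.1.+1 (phi' s)) <-> exists2 k, k \in attach S K s & v = phi k }.

Lemma embedding_empty K phi w : embedding set0 K phi w phi.
Proof. by split=> // s; rewrite inE. Qed.

Section Step.
Variables (S K : {set H}) (phi : H -> vert) (w : vert) (h : H).
Hypothesis P : embedding_problem S K phi w.
Hypotheses (hS : h \in S) (h_complete : forall k s, k \in K -> conn S h s -> adj s k -> adj h k).

Let K_notS k : k \in K -> k \notin S.
Proof. by move=> hk; rewrite (disjointFl (ep_disjoint P) hk). Qed.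

Let S_notK s : s \in S -> s \notin K.
Proof. by move=> hs; apply: contraTN hs; apply: K_notS. Qed.

Let phi_inj : {in K &, injective phi} := faithful_on_inj (ep_faithful P).

Definition nbrs_h := [set k in K | adj h k].
Local Notation A := nbrs_h.

Lemma attach_h : attach S K h = A.
Proof.
apply/setP => k; rewrite !inE; apply: andb_id2l => hk.
apply/existsP/idP => [[s /andP [hhs hsk]]|hhk]; first exact: h_complete hhs hsk.
by exists h; rewrite hhk andbT; apply: connect0.
Qed.

Lemma nbrs_h_sub : A \subset K.
Proof. by apply/subsetP => k; rewrite inE => /andP []. Qed.

Let A_sub_K k : k \in A -> k \in K.
Proof. exact: (subsetP nbrs_h_sub). Qed.

Let h_notA : h \notin A.
Proof. by apply/negP => /A_sub_K/K_notS; rewrite hS. Qed.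

Lemma clique_h : is_clique (h |: A).
Proof.
move=> a b; rewrite /nbrs_h !inE.
move=> /predU1P [-> | /andP [ha hha]] /predU1P [-> | /andP [hb hhb]] hab.
- by rewrite eqxx in hab.
- exact: hhb.
- by rewrite htotal_sym.
- exact: (ep_clique P).
Qed.

Lemma card_nbrs_h : #|A| <= t.
Proof. by have := H_clique clique_h; rewrite cardsU1 h_notA. Qed.

Definition up_black := [seq phi k | k <- enum [set k in K | tblack h k]].
Definition up_red := [seq phi k | k <- enum [set k in K | tred h k]].

Lemma mem_up_black k : k \in K -> (phi k \in up_black) = tblack h k.
Proof.
move=> hk; apply/mapP/idP => [[k' /[!mem_enum] /[!inE] /andP [hk' hb] e]|hb].
  by rewrite (phi_inj hk hk' e).
by exists k; rewrite // mem_enum inE hk.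
Qed.

Lemma mem_up_red k : k \in K -> (phi k \in up_red) = tred h k.
Proof.
move=> hk; apply/mapP/idP => [[k' /[!mem_enum] /[!inE] /andP [hk' hr] e]|hr].
  by rewrite (phi_inj hk hk' e).
by exists k; rewrite // mem_enum inE hk.
Qed.

Lemma up_blackP (v : vert) : v \in up_black -> exists2 k, k \in K & v = phi k.
Proof. by case/mapP => k /[!mem_enum] /[!inE] /andP [hk _] ->; exists k. Qed.

Lemma up_redP (v : vert) : v \in up_red -> exists2 k, k \in K & v = phi k.
Proof. by case/mapP => k /[!mem_enum] /[!inE] /andP [hk _] ->; exists k. Qed.

Lemma mem_up_pattern (v : vert) :
  (v \in up_black) || (v \in up_red) <-> exists2 k, k \in A & v = phi k.
Proof.
split => [/orP [] hv|[k]].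
- have [k hk e] := up_blackP hv.
  by exists k; rewrite // inE hk /htotal -(mem_up_black hk) -e hv.
- have [k hk e] := up_redP hv.
  by exists k; rewrite // inE hk /htotal -(mem_up_red hk) -e hv orbT.
rewrite inE => /andP [hk /orP hhk] ->; apply/orP.
by case: hhk => hhk; [left | right]; apply/mapP; exists k; rewrite // mem_enum inE hk.
Qed.

Lemma up_disj (v : vert) : v \in up_black -> v \notin up_red.
Proof.
move=> hv; have [k hk e] := up_blackP hv.
by move: hv; rewrite e mem_up_black // mem_up_red // => /tdisj.
Qed.

Lemma size_up : size up_black + size up_red <= t.
Proof.
rewrite !size_map -!cardE -cardsUI.
have -> : [set k in K | tblack h k] :&: [set k in K | tred h k] = set0.
  apply/setP => k; rewrite !inE andbACA andbb.
  by case hb: (tblack _ _); rewrite ?(negbTE (tdisj hb)) ?andbF.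
rewrite cards0 addn0; apply: leq_trans card_nbrs_h; apply: subset_leq_card.
by apply/subsetP => k; rewrite !inE -andb_orr.
Qed.

Lemma up_black_red : {in up_black &, forall a b, a != b -> gred a b}.
Proof.
move=> u v hu hv; have [a ha eu] := up_blackP hu; have [b hb ev] := up_blackP hv.
move: hu hv; rewrite eu ev !mem_up_black // => hha hhb hab.
have {}hab : a != b by apply: contraNneq hab => ->.
have hnb : ~~ tblack a b.
  by apply/negP => hb'; apply: (H_real_tf (x := a) (y := h) (z := b)); rewrite tblack_sym.
have [e _] := ep_faithful P ha hb hab; move: e.
have := ep_clique P ha hb hab; rewrite /htotal /atype (negbTE hnb) /= => ->.
by case: (gblack _ _) => //; case: (gred _ _).
Qed.

Lemma carries_w : carries up_black up_red w.
Proof.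
split; first exact: ep_valid P.
move=> v; rewrite mem_cat => /orP [/up_blackP|/up_redP] [k hk ->]; exact: ep_Nup P _ hk.
Qed.

Lemma pattern_hit : many_hits X w #|S| ->
  exists x, [/\ placed_below w x, carries up_black up_red x,
    recB (rec_of x) =i up_black /\ recR (rec_of x) =i up_red,
    forall v : vert, v \in up_nbrs (anc w.1.+1 x) <-> exists2 k, k \in A & v = phi k
  & many_hits X x #|S|.-1].
Proof.
move=> hits; pose c := carry_path up_black up_red w.
have hc : downward_path ord t w c := carry_path_down up_disj size_up up_black_red carries_w.
have carries_c n : carries up_black up_red (c n) :=
  carry_path_carries up_disj size_up up_black_red n carries_w.
have cS n : c n.+1 = carry_step up_black up_red (c n) by [].
have step_spec n := carry_step_spec up_disj size_up up_black_red (carries_c n).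
have up_step n v : v \in up_nbrs (c n.+1) <-> exists2 k, k \in A & v = phi k.
  by have [_ _ hB hR _] := step_spec n; rewrite /up_nbrs cS mem_cat hB hR; apply: mem_up_pattern.
have hits' : many_hits X w #|S|.-1.+1 by rewrite prednK // card_gt0; apply/set0Pn; exists h.
have [n [hn hXn hits_n]] := first_hit hc hits'.
have [m em] : exists m, n = m.+1 by exists n.-1; rewrite prednK.
have [_ hodd hB hR _] := step_spec m; rewrite -cS -em in hodd hB hR.
exists (c n); split => //; last by rewrite -addn1 (downward_path_anc hc (n := 1)) ?em.
split => //; last by case: (carries_c n).
- by rewrite (downward_path_layer hc); lia.
- by rewrite -[in LHS](addn0 w.1) (downward_path_anc hc (n := 0)).
Qed.

Variable x : vert.
Hypotheses (x_placed : placed_below w x) (x_carries : carries up_black up_red x).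
Hypotheses (x_black : recB (rec_of x) =i up_black) (x_red : recR (rec_of x) =i up_red).
Hypothesis x_anc_up :
  forall v : vert, v \in up_nbrs (anc w.1.+1 x) <-> exists2 k, k \in A & v = phi k.

Lemma below_x k : k \in K -> (phi k).1 < x.1 /\ valid (phi k).
Proof.
move=> /(ep_Nup P) /mem_Nup [->|[hl hv]]; have [_ hwx _ _ _] := x_placed; split=> //.
- exact: ep_valid P.
- exact: ltn_trans hl hwx.
Qed.

Lemma x_faithful k : k \in K -> hat h k = gat x (phi k) /\ x != phi k.
Proof.
move=> hk; have [hl hv] := below_x hk; have [_ _ _ _ hx] := x_placed.
split; last by apply: contraTneq hl => <-; rewrite ltnn.
by rewrite /atype gblack_below // gred_below // x_black x_red mem_up_black // mem_up_red.
Qed.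

Definition S_h := [set s in S | (s != h) && (attach S K s == A)].
Definition phi_h y := if y == h then x else phi y.

Lemma phi_h_h : phi_h h = x.
Proof. by rewrite /phi_h eqxx. Qed.

Lemma phi_h_A k : k \in A -> phi_h k = phi k.
Proof. by move=> hk; rewrite /phi_h ifN //; apply: contraNneq h_notA => <-. Qed.

Lemma problem_h : embedding_problem S_h (h |: A) phi_h x.
Proof.
have [_ _ _ _ hxv] := x_placed.
split=> //.
- exact: clique_h.
- rewrite disjoints_subset; apply/subsetP => s; rewrite !inE => /and3P [hsS hsh _].
  by rewrite negb_or hsh /=; apply/negP => /andP [/K_notS]; rewrite hsS.
- move=> s y; rewrite [s \in S_h]inE => /and3P [hsS hsh /eqP hsA] hsy.
  case/setUP: (ep_closed P hsS hsy) => hy.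
    case: (eqVneq y h) => [->|hyh]; first by rewrite !inE eqxx orbT.
    by rewrite !inE hy hyh -(attach_edge K hsS hy hsy) hsA eqxx.
  by rewrite !in_setU -hsA (attach_self _ hy hsy) !orbT.
- move=> k; rewrite in_setU1 => /predU1P [->|hk]; first by rewrite phi_h_h Nup_self.
  by rewrite phi_h_A //; apply: x_carries.2; rewrite mem_cat; apply/mem_up_pattern; exists k.
- move=> k1 k2; rewrite !in_setU1 => /predU1P [->|h1] /predU1P [->|h2] hne.
  + by rewrite eqxx in hne.
  + by rewrite phi_h_h phi_h_A //; apply/x_faithful/A_sub_K.
  + by rewrite phi_h_h phi_h_A // hat_sym gat_sym eq_sym; apply/x_faithful/A_sub_K.
  + by rewrite !phi_h_A //; apply: (ep_faithful P) => //; apply: A_sub_K.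
Qed.

Lemma card_S_h : #|S_h| < #|S|.
Proof.
apply: proper_card; rewrite properE; apply/andP; split.
  by apply/subsetP => s; rewrite inE => /andP [].
by apply/subsetPn; exists h; rewrite // inE eqxx andbF.
Qed.

Variable psi : H -> vert.
Hypothesis E_h : embedding S_h (h |: A) phi_h x psi.

Let S_h_S s : s \in S_h -> s \in S.
Proof. by rewrite inE => /andP []. Qed.

Lemma psi_K k : k \in K -> psi k = phi k.
Proof.
move=> hk; rewrite (emb_id E_h); last by apply/negP => /S_h_S/S_notK; rewrite hk.
by rewrite /phi_h ifN //; apply: contraTneq hk => ->; apply: S_notK.
Qed.

Lemma psi_h : psi h = x.
Proof. by rewrite (emb_id E_h) ?phi_h_h // inE eqxx andbF. Qed.

Definition S_rest := [set s in S | attach S K s != A].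

Let S_rest_S s : s \in S_rest -> s \in S.
Proof. by rewrite inE => /andP []. Qed.

Lemma S_rest_closed a y : a \in S_rest -> y \in S -> adj a y -> y \in S_rest.
Proof.
rewrite !inE => /andP [haS haA] hy hay.
by rewrite hy -(attach_edge K haS hy hay).
Qed.

Lemma attach_rest s : s \in S_rest -> attach S_rest K s = attach S K s.
Proof.
by move=> hs; apply: attach_restrict => //; [apply/subsetP => y /S_rest_S | apply: S_rest_closed].
Qed.

Lemma problem_rest : embedding_problem S_rest K psi w.
Proof.
split; [exact: ep_clique P | | | | | exact: ep_valid P].
- by rewrite disjoints_subset; apply/subsetP => s /S_rest_S/S_notK; rewrite inE.
- move=> s y hs hsy; case/setUP: (ep_closed P (S_rest_S hs) hsy) => hy; rewrite in_setU.
    by rewrite (S_rest_closed hs hy hsy).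
  by rewrite hy orbT.
- by move=> k hk; rewrite psi_K //; apply: ep_Nup P _ hk.
- by move=> k1 k2 h1 h2 hne; rewrite !psi_K //; apply: (ep_faithful P).
Qed.

Lemma card_S_rest : #|S_rest| < #|S|.
Proof.
apply: proper_card; rewrite properE; apply/andP; split.
  by apply/subsetP => s /S_rest_S.
by apply/subsetPn; exists h; rewrite // inE attach_h eqxx andbF.
Qed.

Variable phi' : H -> vert.
Hypothesis E_rest : embedding S_rest K psi w phi'.

Let S_h_notin_rest s : s \in h |: S_h -> s \notin S_rest.
Proof.
rewrite !inE => /predU1P [->|/and3P [_ _ hsA]]; first by rewrite attach_h eqxx andbF.
by rewrite hsA andbF.
Qed.

Let S_split s : s \in S -> (s \in h |: S_h) || (s \in S_rest).
Proof. by move=> hs; rewrite !inE hs /=; case: eqP; rewrite ?orbT ?orbN. Qed.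

Lemma phi'_K k : k \in K -> phi' k = phi k.
Proof.
by move=> hk; rewrite (emb_id E_rest) ?psi_K //; apply/negP => /S_rest_S/S_notK; rewrite hk.
Qed.

Lemma phi'_h : phi' h = x.
Proof. by rewrite (emb_id E_rest) ?psi_h // S_h_notin_rest // setU11. Qed.

Lemma phi'_S_h s : s \in S_h -> phi' s = psi s.
Proof. by move=> hs; rewrite (emb_id E_rest) // S_h_notin_rest // setU1r. Qed.

Lemma h_part_S s : s \in h |: S_h -> s \in S.
Proof. by rewrite in_setU1 => /predU1P [->|/S_h_S]. Qed.

Lemma h_part_attach s : s \in h |: S_h -> attach S K s = A.
Proof. by rewrite in_setU1 => /predU1P [->|]; rewrite ?attach_h // inE => /and3P [_ _ /eqP]. Qed.

Lemma h_part_placed s : s \in h |: S_h ->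
  placed_below w (phi' s) /\ anc w.1.+1 (phi' s) = anc w.1.+1 x.
Proof.
have [hXx hwx hax hox hvx] := x_placed.
rewrite in_setU1 => /predU1P [->|hs]; first by rewrite phi'_h.
have [hX hl ha ho hv] := emb_placed E_h hs; rewrite phi'_S_h //.
have anc_x l : l <= x.1 -> anc l (psi s) = anc l x.
  by move=> hlx; rewrite -[in RHS]ha anc_anc // hlx ltnW.
split; first split => //.
- exact: ltn_trans hwx hl.
- by rewrite anc_x // ltnW.
- by rewrite anc_x.
Qed.

Lemma rest_part_anc s : s \in S_rest -> anc w.1.+1 (phi' s) != anc w.1.+1 x.
Proof.
move=> hs; apply/negP => /eqP e; move: (hs); rewrite inE => /andP [hsS]; apply/negP; rewrite negbK.
apply/eqP/setP => k; apply/idP/idP => hk.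
- have hkK : k \in K by apply: (subsetP (attach_sub S K s)).
  have /x_anc_up [k' hk' /phi_inj ek] : phi k \in up_nbrs (anc w.1.+1 x).
    by rewrite -e; apply/(emb_attach E_rest _ hs); exists k; rewrite ?psi_K ?attach_rest.
  by rewrite ek // A_sub_K.
- have /(emb_attach E_rest _ hs) [k' hk' ek] : phi k \in up_nbrs (anc w.1.+1 (phi' s)).
    by rewrite e; apply/x_anc_up; exists k.
  rewrite attach_rest // in hk'; have hk'K := subsetP (attach_sub S K s) _ hk'.
  by rewrite psi_K // in ek; rewrite (phi_inj (A_sub_K hk) hk'K ek).
Qed.

Lemma phi'_psi y : y \in S_h :|: (h |: A) -> phi' y = psi y.
Proof.
rewrite in_setU in_setU1 => /or3P [/phi'_S_h //|/eqP ->|hy]; first by rewrite phi'_h psi_h.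
by rewrite phi'_K ?psi_K // A_sub_K.
Qed.

Lemma K_layer k : k \in K -> (phi k).1 <= w.1.
Proof. by move=> /(ep_Nup P) /mem_Nup [->|[/ltnW]]. Qed.

Lemma h_part_up s (v : vert) : s \in h |: S_h -> v \in up_nbrs (phi' s) ->
  exists2 y, (y \in h |: S_h) || (y \in A) & v = phi' y.
Proof.
rewrite in_setU1 => /predU1P [->|hs].
  rewrite phi'_h /up_nbrs mem_cat x_black x_red => /mem_up_pattern [k hk ->].
  by exists k; rewrite ?phi'_K ?A_sub_K // hk orbT.
rewrite phi'_S_h // => /(emb_up E_h hs) [y hy ->].
exists y; rewrite ?phi'_psi //.
by move: hy; rewrite !in_setU !in_set1 => /or3P [] ->; rewrite ?orbT.
Qed.

Lemma h_part_layer y : y \in h |: S_h -> w.1 < (phi' y).1.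
Proof. by case/h_part_placed => [[]]. Qed.

Lemma cross_none s1 s2 : s1 \in h |: S_h -> s2 \in S_rest ->
  [/\ hat s1 s2 = ANone, gat (phi' s1) (phi' s2) = ANone & phi' s1 != phi' s2].
Proof.
move=> hs1 hs2.
have [[_ hl1 _ he1 _] ha1] := h_part_placed hs1.
have [_ hl2 _ he2 _] := emb_placed E_rest hs2.
have ha2 := rest_part_anc hs2.
have hs1S := h_part_S hs1.
have hA1 := h_part_attach hs1.
split.
- apply: hat_none; apply/negP => hadj; move: hs2; rewrite inE => /andP [hs2S].
  by rewrite -(attach_edge K hs1S hs2S hadj) hA1 eqxx.
- apply: gat_none; first by rewrite he1 he2 orbT.
  + apply/negP => /(h_part_up hs1) [y /orP [hy|hy] e].
      by move: ha2; rewrite e; have [_ ->] := h_part_placed hy; rewrite eqxx.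
    by move: hl2; rewrite e phi'_K ?A_sub_K // ltnNge K_layer ?A_sub_K.
  + apply/negP => /(emb_up E_rest hs2) [y /setUP [hy|hy] e].
      by move: (rest_part_anc hy); rewrite -e ha1 eqxx.
    by move: hl1; rewrite e phi'_K // ltnNge K_layer.
- by apply: contraNneq ha2 => <-; rewrite ha1.
Qed.

Lemma h_part_faithful : faithful_on (h |: S_h) (h |: S_h) phi'.
Proof.
have in_h_part y : y \in h |: S_h -> y \in S_h :|: (h |: A).
  by rewrite !in_setU !in_set1 => /orP [] ->; rewrite ?orbT.
move=> a b ha hb hab; rewrite !phi'_psi ?in_h_part //.
move: (ha); rewrite in_setU1 => /predU1P [ea|ha'].
  have hb' : b \in S_h by move: hb; rewrite in_setU1 => /predU1P [eb|//]; rewrite ea eb eqxx in hab.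
  by apply: (faithful_onC (emb_faithful E_h)) => //; rewrite in_h_part.
by apply: (emb_faithful E_h) => //; rewrite in_h_part.
Qed.

Lemma faithful_K s k : s \in S -> k \in K ->
  hat s k = gat (phi' s) (phi' k) /\ phi' s != phi' k.
Proof.
move=> hs hk; have hsk : s != k by apply: contraTneq hs => ->; apply: K_notS.
case/orP: (S_split hs) => [hs1|hs2]; last first.
  by apply: (emb_faithful E_rest) => //; rewrite in_setU hk orbT.
rewrite (phi'_K hk); move: (hs1); rewrite in_setU1 => /predU1P [->|hsh].
  by rewrite phi'_h; apply: x_faithful.
have hsA : attach S K s = A by move: hsh; rewrite inE => /and3P [_ _ /eqP].
case hkA : (k \in A).
  have := emb_faithful E_h hsh; rewrite phi'_S_h // -(psi_K hk); apply => //.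
  by rewrite !in_setU hkA !orbT.
have hl := h_part_layer hs1; have hkl := K_layer hk.
split; last by apply: contraTneq hl => ->; rewrite -leqNgt.
rewrite hat_none; last by apply/negP => /(attach_self S hk); rewrite hsA hkA.
symmetry; apply: gat_none.
- by apply/orP; left; apply: contraTneq hl => ->; rewrite -leqNgt.
- apply/negP => /(h_part_up hs1) [y /orP [hy|hy] e].
    by move: (h_part_layer hy); rewrite -e ltnNge hkl.
  by move: hkA; rewrite (phi_inj hk (A_sub_K hy) (etrans e (phi'_K (A_sub_K hy)))) hy.
- apply/negP => /up_nbrs_below [hlt _].
  by move: hl; rewrite ltnNge (leq_trans (ltnW hlt) hkl).
Qed.

Lemma embedding_step : embedding S K phi w phi'.
Proof.
split.
- move=> y hy; have hy2 : y \notin S_rest by apply: contraNN hy => /S_rest_S.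
  have hy1 : y \notin S_h by apply: contraNN hy => /S_h_S.
  rewrite (emb_id E_rest) // (emb_id E_h) // /phi_h ifN //.
  by apply: contraNneq hy => ->.
- move=> s /S_split /orP [/h_part_placed []//|hs]; exact: (emb_placed E_rest hs).
- move=> s y hs; rewrite in_setU => /orP [hy|hy] hsy; last exact: faithful_K.
  case/orP: (S_split hs) => hs'; case/orP: (S_split hy) => hy'.
  + exact: h_part_faithful.
  + by have [-> -> ->] := cross_none hs' hy'.
  + by have [e1 e2 e3] := cross_none hy' hs'; rewrite hat_sym gat_sym eq_sym e1 e2 e3.
  + by apply: (emb_faithful E_rest) => //; rewrite in_setU hy'.
- move=> s v /S_split /orP [hs|hs].
    move/(h_part_up hs) => [y /orP [hy|hy] ->]; exists y => //.
      by rewrite in_setU h_part_S.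
    by rewrite in_setU A_sub_K ?orbT.
  move/(emb_up E_rest hs) => [y hy ->]; exists y => //.
  by move: hy; rewrite !in_setU => /orP [/S_rest_S ->|->]; rewrite ?orbT.
- move=> s v /S_split /orP [hs|hs].
    by have [_ ->] := h_part_placed hs; rewrite x_anc_up h_part_attach.
  rewrite (emb_attach E_rest _ hs) attach_rest //.
  by split=> [[k hk ->]|[k hk ->]]; exists k; rewrite ?psi_K // (subsetP (attach_sub S K s)).
Qed.
End Step.

Lemma embedding_exists n S K phi w : #|S| <= n -> embedding_problem S K phi w ->
  many_hits X w #|S| -> exists phi', embedding S K phi w phi'.
Proof.
elim: n S K phi w => [|n IH] S K phi w hn P hits.
  by exists phi; move: hn; rewrite leqn0 cards_eq0 => /eqP ->; apply: embedding_empty.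
have [->|[s0 hs0]] := set_0Vmem S; first by exists phi; apply: embedding_empty.
have [h [hS hs0h hcomplete]] := complete_vertex H_chordal (ep_clique P) (ep_disjoint P) hs0.
have h_complete k s : k \in K -> conn S h s -> adj s k -> adj h k.
  by move=> hk hhs; apply: hcomplete hk (connect_trans hs0h hhs).
have [x [hxp hxc [hxB hxR] hxanc hits_x]] := pattern_hit P hS hits.
have hSh : #|S_h S K h| <= #|S|.-1 by rewrite -ltnS prednK ?card_S_h //; apply/card_gt0P; exists h.
have [psi E_h] := IH _ _ _ _ (leq_trans (card_S_h K hS) hn)
  (problem_h P hS hxp hxc hxB hxR) (many_hits_le hSh hits_x).
have [phi' E_rest] := IH _ _ _ _ (leq_trans (card_S_rest hS h_complete) hn)
  (problem_rest P hS E_h) (many_hits_le (ltnW (card_S_rest hS h_complete)) hits).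
by exists phi'; apply: (embedding_step P hS h_complete hxp hxB hxR hxanc E_h E_rest).
Qed.

Lemma copy_from_root S K u : valid u -> #|K| <= 1 -> [disjoint S & K] ->
  (forall y, y \in S :|: K) -> (K != set0 -> X u) -> many_hits X u #|S| ->
  exists f : H -> vert, [/\ injective f, forall y, X (f y) &
    forall a b, a != b -> hat a b = gat (f a) (f b)].
Proof.
move=> hu hK hdis hall hXu hits.
have K_trivial a b : a \in K -> b \in K -> a = b.
  move=> ha hb; apply/eqP; apply: contraLR hK => hab.
  by rewrite -ltnNge (cardD1 a) ha (cardD1 b) !inE hb eq_sym hab.
have P : embedding_problem S K (fun _ => u) u.
  split=> //.
  - by move=> a b ha hb hab; rewrite (K_trivial a b) ?eqxx in hab.
  - by move=> k _; exact (Nup_self _ _).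
  - by move=> a b ha hb hab; rewrite (K_trivial a b) ?eqxx in hab.
have [phi' E] := embedding_exists (leqnn _) P hits.
have phi'_K k : k \in K -> phi' k = u by move=> hk; rewrite (emb_id E) // (disjointFl hdis hk).
have faithful : faithful_on [set: H] [set: H] phi'.
  move=> a b _ _ hab; case/setUP: (hall a) => ha.
    by apply: (emb_faithful E).
  case/setUP: (hall b) => hb; last by rewrite (K_trivial a b) ?eqxx in hab.
  by apply: (faithful_onC (emb_faithful E)); rewrite // in_setU ha orbT.
exists phi'; split.
- by move=> a b e; apply: (faithful_on_inj faithful).
- move=> y; case/setUP: (hall y) => hy; first by case: (emb_placed E hy).
  by rewrite phi'_K //; apply: hXu; apply/set0Pn; exists y.
- by move=> a b hab; case: (faithful a b (in_setT a) (in_setT b) hab).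
Qed.

Lemma copy_of_many_hits u : valid u ->
  (forall p, downward_path ord t u p ->
     exists s : seq nat, [/\ uniq s, forall n, n \in s -> X (p n) & #|H| <= size s]) ->
  exists f : H -> vert, [/\ injective f, forall y, X (f y) &
    forall a b, a != b -> hat a b = gat (f a) (f b)].
Proof.
move=> hu hits.
case: (classic (exists h0 : H, X u)) => [[h0 hXu]|no_root].
  apply: (copy_from_root hu (S := [set~ h0]) (K := [set h0])) => //.
  - by rewrite cards1.
  - by rewrite disjoint_sym disjoints1 !inE negbK.
  - by move=> y; rewrite !inE orNb.
  - by rewrite cardsC1; apply: many_hits_pred.
apply: (copy_from_root hu (S := [set: H]) (K := set0)).
- by rewrite cards0.
- by rewrite disjoints_subset setC0 subsetT.
- by move=> y; rewrite in_setU in_setT.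
- by rewrite eqxx.
rewrite cardsT; case: (classic (X u)) => hXu; last exact: many_hits_notX.
have -> : #|H| = #|H|.-1.
  by case: (posnP #|H|) => [-> //|/card_gt0P [h0 _]]; case: no_root; exists h0.
exact: many_hits_pred.
Qed.
End Embedding.

End Layers.

Theorem lemma4p11 (t : nat) (ord : order_fn) :
  0 < t -> valid_order ord ->
  forall H : trigraph,
    chordal H -> clique_num_le H t.+1 -> real_triangle_free H ->
  forall X : vert -> Prop,
    (forall v, X v -> Gvert ord t v) -> Hfree_in ord t H X ->
  forall u : vert, Gvert ord t u ->
  exists p : nat -> vert, downward_path ord t u p /\
    (forall s : seq nat, uniq s -> (forall n, n \in s -> X (p n)) ->
       size s <= #|H| - 1).
Proof.
move=> _ ord_perm H H_chordal H_clique H_tf X _ H_free u hu.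
apply: NNPP => no_path; apply: H_free.
have hits p : downward_path ord t u p ->
    exists s : seq nat, [/\ uniq s, forall n, n \in s -> X (p n) & #|H| <= size s].
  move=> hp; apply: NNPP => no_s; apply: no_path; exists p; split => // s hs hX.
  rewrite leqNgt; apply/negP => hlt; apply: no_s; exists s; split => //; lia.
have [f [f_inj fX f_faithful]] := copy_of_many_hits ord_perm H_chordal H_clique H_tf hu hits.
by exists f; split => // a b hab; rewrite f_faithful // /atype GblackE GredE.
Qed.
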